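(* Let $q$ be an odd prime power, and let $P(q^2)$ be the Paley graph on $\mathbb{F}_{q^2}$. Let $\varphi$ be the automorphism of $P(q^2)$ given by $\varphi(\gamma)=\gamma^q$. (1) If $q\equiv 1\pmod 4$, then $\varphi$ interchanges only non-adjacent vertices. (2) If $q\equiv 3\pmod 4$, then $\varphi$ interchanges only adjacent vertices.
   Context: The Paley graph $P(r)$, for a prime power $r\equiv 1\pmod 4$, has vertex set $\mathbb{F}_r$, with $x,y$ adjacent iff $x-y$ is a non-zero square in $\mathbb{F}_r$. $\varphi$ is an involution; it ''interchanges only non-adjacent (resp. adjacent) vertices'' if every $\gamma$ with $\varphi(\gamma)\ne\gamma$ is non-adjacent (resp. adjacent) to $\varphi(\gamma)$. *)

From mathcomp Require Import all_boot all_order all_algebra all_field.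
Set Implicit Arguments. Unset Strict Implicit. Unset Printing Implicit Defensive.
Import GRing.Theory.
Local Open Scope ring_scope.

Definition paley_adj (F : finFieldType) (x y : F) : bool :=
  (x - y != 0) && [exists z : F, z ^+ 2 == x - y].

Definition frobq (F : finFieldType) (q : nat) (g : F) : F := g ^+ q.

Definition interchanges_only_nonadj (F : finFieldType) (phi : F -> F) : Prop :=
  forall g : F, phi g != g -> ~~ paley_adj g (phi g).
Definition interchanges_only_adj (F : finFieldType) (phi : F -> F) : Prop :=
  forall g : F, phi g != g -> paley_adj g (phi g).

From mathcomp Require Import all_boot all_order all_algebra all_field.
From mathcomp Require Import fingroup cyclic zify.
Set Implicit Arguments. Unset Strict Implicit. Unset Printing Implicit Defensive.
Import GRing.Theory.

(* The map [x |-> x ^+ q] is an additive involution of the field of order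
   [q ^ 2], so the difference [d := g - g ^+ q] of a moved point satisfies
   [d ^+ q = - d], i.e. [d ^+ (q - 1) = -1].  Hence
   [d ^+ ((q ^ 2 - 1) / 2) = (-1) ^+ ((q + 1) / 2)], and by Euler's criterion
   [d] is a square iff [(q + 1) / 2] is even, i.e. iff [q = 3 %[mod 4]]. *)

Lemma sqr_pred_half q : odd q -> (q ^ 2).-1 %/ 2 = q.-1 * (q.+1 %/ 2).
Proof.
move=> oq; have [m ->] : exists m, q = (2 * m).+1.
  by exists (q %/ 2); have := modn2 q; rewrite oq /=; lia.
have -> : (2 * m).+2 %/ 2 = m.+1 by lia.
have -> : ((2 * m).+1 ^ 2).-1 = 2 * (2 * m * m.+1) by rewrite expnS expn1; nia.
by rewrite mulKn.
Qed.

Lemma odd_succ_half q : odd q -> odd (q.+1 %/ 2) = (q %% 4 == 1).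
Proof.
move=> oq; have := modn2 q; rewrite oq /= => q_mod2.
by have := modn2 (q.+1 %/ 2); case: odd => /=; lia.
Qed.

Local Open Scope ring_scope.

Section FiniteFieldSquares.

Variable F : finFieldType.
Implicit Types x z : F.

Lemma expf_card_pred x : x != 0 -> x ^+ #|F|.-1 = 1.
Proof.
move=> x0; apply: (mulfI x0); rewrite -exprS prednK ?expf_card ?mulr1 //.
by rewrite (cardD1 x).
Qed.

Lemma finField_prim_root : exists w : F, (#|F|.-1).-primitive_root w.
Proof.
have /hasP[w _ prim_w] : has (#|F|.-1).-primitive_root (enum (predC1 (0 : F))).
  apply: has_prim_root; last by rewrite -cardE cardC1.
  - by rewrite -(cardC1 0) (cardD1 1) !inE oner_eq0.
  - by apply/allP=> x; rewrite mem_enum => /expf_card_pred/unity_rootP.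
  - exact: enum_uniq.
by exists w.
Qed.

Lemma natr_card : (#|F|%:R : F) = 0.
Proof.
rewrite -FinRing.zmodXgE -FinRing.zmod1gE -cardsT.
exact: expg_cardG (in_setT _).
Qed.

Hypothesis oddF : odd #|F|.

Lemma oppr1_neq1 : (-1 : F) != 1.
Proof.
apply/negP=> /eqP m11.
have pchar2 : 2%N \in [pchar F] by rewrite inE /= mulr2n addr_eq0 m11.
move: natr_card; rewrite -(GRing.natr_mod_pchar pchar2) modn2 oddF.
by move/eqP; rewrite oner_eq0.
Qed.

Lemma euler_criterion x :
  x != 0 -> [exists z, z ^+ 2 == x] = (x ^+ (#|F|.-1 %/ 2) == 1).
Proof.
move=> x0; have card_predE : #|F|.-1 = (2 * (#|F|.-1 %/ 2))%N.
  by have := modn2 #|F|; rewrite oddF; lia.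
apply/existsP/eqP=> [[z /eqP z2x] | x_half].
  rewrite -z2x -exprM -card_predE expf_card_pred //.
  by apply: contraNneq x0 => z0; rewrite -z2x z0 expr0n.
have [w prim_w] := finField_prim_root.
have [[i _] /= xE] := prim_rootP prim_w (expf_card_pred x0).
have : (#|F|.-1 %| i * (#|F|.-1 %/ 2))%N.
  by rewrite (prim_order_dvd prim_w) exprM -xE x_half.
rewrite {1}card_predE dvdn_pmul2r => [/dvdnP[j ij] | ].
  by exists (w ^+ j); rewrite xE ij -exprM mulnC.
by have := prim_order_gt0 prim_w; rewrite {1}card_predE muln_gt0 => /andP[].
Qed.

End FiniteFieldSquares.

Section FrobeniusInvolution.

Variables (F : finFieldType) (q : nat).
Hypotheses (pchar_q : [pchar F].-nat q) (odd_q : odd q) (cardF : #|F| = (q ^ 2)%N).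
Implicit Types x y g : F.

Lemma frobqB x y : frobq q (x - y) = frobq q x - frobq q y.
Proof. by rewrite /frobq exprDn_pchar // exprNn_pchar. Qed.

Lemma frobqK : involutive (@frobq F q).
Proof. by move=> x; rewrite /frobq -exprM -[RHS](expf_card x) cardF. Qed.

Lemma frobq_sub_frobq g : frobq q (g - frobq q g) = - (g - frobq q g).
Proof. by rewrite frobqB frobqK opprB. Qed.

Lemma sub_frobq_expr_pred g : frobq q g != g -> (g - frobq q g) ^+ q.-1 = -1.
Proof.
rewrite eq_sym -subr_eq0 => d0; apply: (mulfI d0).
by rewrite -exprS prednK ?odd_gt0 // -[_ ^+ q]/(frobq q _) frobq_sub_frobq mulrN1.
Qed.

Lemma paley_adj_frobq g :
  frobq q g != g -> paley_adj g (frobq q g) = (q %% 4 != 1)%N.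
Proof.
move=> moved; have d0 : g - frobq q g != 0 by rewrite subr_eq0 eq_sym.
have oddF : odd #|F| by rewrite cardF oddX odd_q orbT.
rewrite /paley_adj d0 euler_criterion // cardF sqr_pred_half // exprM.
rewrite sub_frobq_expr_pred // -signr_odd odd_succ_half //.
case: (q %% 4 == 1)%N; last by rewrite expr0 eqxx.
by rewrite expr1 (negPf (oppr1_neq1 oddF)).
Qed.

End FrobeniusInvolution.

Local Close Scope ring_scope.

Theorem lemma26 (F : finFieldType) (q : nat) :
  (exists p k : nat, [/\ prime p, (0 < k)%N & q = p ^ k]) ->
  odd q ->
  #|F| = (q ^ 2)%N ->
  ((q %% 4 = 1)%N -> interchanges_only_nonadj (frobq (F:=F) q)) /\
  ((q %% 4 = 3)%N -> interchanges_only_adj (frobq (F:=F) q)).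
Proof.
move=> [p [k [p_pr _ qE]]] odd_q cardF.
have pchar_p : p \in [pchar F]%R.
  by apply: (card_finPcharP (n := (k * 2)%N)); rewrite // cardF qE -expnM.
have pchar_q : [pchar F]%R.-nat q by rewrite qE pnatX pnatE ?pchar_p.
by split=> q_mod4 g moved; rewrite paley_adj_frobq // q_mod4.
Qed.
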